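(* Let $n\ge1$ and let $\hat\pi$ be a linked cycle on $[n]$. Then in the marked linear representation of $\hat\pi$, the number of arcs plus the number of marks equals $n-1$.
   Context: Two finite sets of integers $E,F$ are nearly disjoint if for every $i\in E\cap F$ either ($i=\min(E)$, $|E|>1$, $i\ne\min(F)$) or ($i=\min(F)$, $|F|>1$, $i\ne\min(E)$). A linked partition of $[n]$ is a set of nonempty subsets (blocks) of $[n]$ with union $[n]$, any two distinct blocks nearly disjoint; each element lies in one or two blocks (singly/doubly covered). A linked cycle on $[n]$ is a linked partition of $[n]$ in which the elements of each block are arranged in a cycle; a cycle is written $(i_1i_2\dots i_t)$ with $i_1$ its minimum. The linear representation of $\hat\pi$: for each $i\in[n]$ create vertices as follows: if $i$ is singly covered and is the minimum of its cycle, which has $k+1$ elements, create $i^{(1)},\dots,i^{(k)}$ if $k\ge1$, and a single isolated vertex $i^{(1)}$ if $k=0$; if $i$ is singly covered and not the minimum of its cycle, create $i^{(0)}$; if $i$ is doubly covered and is the minimum of a cycle of size $k+1$, create $i^{(0)},i^{(1)},\dots,i^{(k)}$. Vertices are placed on a line ordered by $i$ and then by superscript. For each cycle $(i_1i_2\dots i_t)$ with $t\ge2$ draw the arcs $(i_1^{(j)},i_{t+1-j}^{(0)})$ for $j=1,\dots,t-1$. The marked linear representation additionally places a mark immediately before $i^{(1)}$ for each singly covered $i\neq1$ that is the minimum of its cycle. *)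

From mathcomp Require Import all_boot.
Set Implicit Arguments. Unset Strict Implicit. Unset Printing Implicit Defensive.

(* A finite set of integers is represented by a duplicate-free seq nat.      *)
Definition smin (s : seq nat) : nat := foldr minn (head 0 s) s.

Definition nearly_disjoint (E F : seq nat) : Prop :=
  forall i, i \in E -> i \in F ->
    (i = smin E /\ 1 < size E /\ i <> smin F) \/
    (i = smin F /\ 1 < size F /\ i <> smin E).

(* A cycle (i_1 i_2 ... i_t) is written as the seq [:: i_1; ...; i_t] with   *)
(* i_1 its minimum.  A linked cycle on [n] is a list of such cycles whose     *)
(* underlying blocks form a linked partition of [n] = {1,...,n}.              *)
Definition is_cycle_on (n : nat) (c : seq nat) : Prop :=
  [/\ c != [::], uniq c, all (fun x => 1 <= x <= n) c & head 0 c = smin c].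

Definition linked_cycle (n : nat) (L : seq (seq nat)) : Prop :=
  [/\ forall c, c \in L -> is_cycle_on n c,
      forall i, 1 <= i <= n -> exists2 c, c \in L & i \in c
    & forall p q, p < size L -> q < size L -> p <> q ->
        nearly_disjoint (nth [::] L p) (nth [::] L q)].

Definition cover_count (L : seq (seq nat)) (i : nat) : nat :=
  count (fun c => i \in c) L.

Definition singly_covered L i := cover_count L i = 1.

(* Vertices of the linear representation are pairs (i, superscript). *)
Definition vertex := (nat * nat)%type.

(* Arcs of the linear representation contributed by a cycle (i_1 ... i_t):  *)
(* (i_1^(j), i_(t+1-j)^(0)) for j = 1 .. t-1 (empty if t = 1).              *)
Definition cycle_arcs (c : seq nat) : seq (vertex * vertex) :=
  [seq ((head 0 c, j), (nth 0 c (size c - j), 0)) | j <- iota 1 (size c).-1].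

Definition arcs (L : seq (seq nat)) : seq (vertex * vertex) :=
  flatten [seq cycle_arcs c | c <- L].

(* A mark is placed before i^(1) for each singly covered i <> 1 that is the  *)
(* minimum of its cycle; number of marks: *)
Definition marks (n : nat) (L : seq (seq nat)) : nat :=
  count (fun i => [&& i != 1, cover_count L i == 1 & has (fun c => head 0 c == i) L])
        (iota 1 n).

From mathcomp Require Import all_boot zify.
Set Implicit Arguments. Unset Strict Implicit. Unset Printing Implicit Defensive.

(* Double count the incidences (i, c) with i in the cycle c.  A cycle of size
   t contributes t - 1 arcs, so there are size (arcs L) + size L incidences.
   Near-disjointness makes every i the minimum of at most one cycle and a
   non-minimum of at most one cycle, and 1 is never a non-minimum; a case
   check then gives, for each i in [n],
     (cycles containing i) + [i is marked] = [i != 1] + (cycles with minimum i),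
   and summing over i yields size (arcs L) + size L + marks = (n - 1) + size L. *)

Lemma sum_bool_count (T : Type) (a : pred T) (s : seq T) :
  \sum_(x <- s) (a x : nat) = count a s.
Proof. by rewrite -sumn_count sumnE big_map. Qed.

Lemma sum_count_pred1 (T : eqType) (I s : seq T) :
  uniq I -> {subset s <= I} -> \sum_(i <- I) count (pred1 i) s = size s.
Proof.
move=> uI; elim: s => [|x s IHs] sI /=; first by rewrite big1.
rewrite big_split /= IHs => [|y ys]; last by rewrite sI // inE ys orbT.
rewrite (eq_bigr (fun i => (pred1 x i : nat))) => [|i _]; last by rewrite /= eq_sym.
by rewrite sum_bool_count count_uniq_mem // sI ?mem_head.
Qed.

Lemma sum_count_mem (T : eqType) (I : seq T) (L : seq (seq T)) :
  uniq I -> all uniq L -> {subset flatten L <= I} ->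
  \sum_(i <- I) count (fun c => i \in c) L = sumn (shape L).
Proof.
move=> uI /allP uL sLI; rewrite -size_flatten -(sum_count_pred1 uI sLI).
apply: eq_bigr => i _; rewrite count_flatten -sumn_count.
by congr sumn; apply/eq_in_map => c /uL uc; rewrite count_uniq_mem.
Qed.

Lemma sum_count_head (T : eqType) (x0 : T) (I : seq T) (L : seq (seq T)) :
  uniq I -> {subset map (head x0) L <= I} ->
  \sum_(i <- I) count (fun c => head x0 c == i) L = size L.
Proof.
move=> uI sLI; rewrite -(size_map (head x0)) -(sum_count_pred1 uI sLI).
by apply: eq_bigr => i _; rewrite count_map.
Qed.

Lemma count_le1_nth (T : Type) (x0 : T) (P : pred T) (s : seq T) :
  (forall p q, p < size s -> q < size s ->
     P (nth x0 s p) -> P (nth x0 s q) -> p = q) ->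
  count P s <= 1.
Proof.
elim: s => [|x s IHs] //= Ps; case Px: (P x) => /=.
  rewrite add1n ltnS leqn0 -[_ == 0]negbK -lt0n -has_count.
  apply/negP => hasPs.
  have lt_find : (find P s).+1 < size (x :: s) by rewrite /= ltnS -has_find.
  by have := Ps 0 _ isT lt_find Px (nth_find x0 hasPs).
by apply: IHs => p q lp lq Pp Pq; have [] := Ps p.+1 q.+1 lp lq Pp Pq.
Qed.

Lemma size_arcs_add_size (L : seq (seq nat)) :
  all (predC1 [::]) L -> size (arcs L) + size L = sumn (shape L).
Proof.
elim: L => // c L IHL /andP [c0 /IHL IH].
rewrite [arcs _]/arcs map_cons /= -/(arcs L) size_cat [sumn _]/= -IH.
rewrite size_map size_iota; case: c c0 => // x c _; rewrite [size _]/=; lia.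
Qed.

Lemma nearly_disjoint_smin_neq E F i :
  nearly_disjoint E F -> i \in E -> i \in F -> smin E <> smin F.
Proof. by move=> EF iE iF; case: (EF i iE iF) => [[-> [_]] | [-> [_ /nesym]]]. Qed.

Lemma nearly_disjoint_common_smin E F i :
  nearly_disjoint E F -> i \in E -> i \in F -> i = smin E \/ i = smin F.
Proof. by move=> EF iE iF; case: (EF i iE iF) => [[->] | [->]]; [left | right]. Qed.

Lemma smin_le (s : seq nat) x : x \in s -> smin s <= x.
Proof.
rewrite /smin; elim: s (head 0 s) => [|y s IHs] //= d.
rewrite in_cons => /orP [/eqP -> | /(IHs d) le_x]; first exact: geq_minl.
exact: leq_trans (geq_minr _ _) le_x.
Qed.

Definition marked (L : seq (seq nat)) (i : nat) : bool :=
  [&& i != 1, cover_count L i == 1 & has (fun c => head 0 c == i) L].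

Section LinkedCycle.

Variables (n : nat) (L : seq (seq nat)).
Hypothesis HL : linked_cycle n L.

Lemma linked_cycle_head c : c \in L -> head 0 c \in c /\ head 0 c = smin c.
Proof.
case: HL => cycL _ _ cL; have [c0 _ _ hE] := cycL c cL; split => //.
by case: c c0 {cL hE} => // x c _; exact: mem_head.
Qed.

Lemma linked_cycle_sub_iota : {subset flatten L <= iota 1 n}.
Proof.
case: HL => cycL _ _ x /flattenP [c /cycL [_ _ /allP rangec _] /rangec].
by rewrite mem_iota add1n ltnS.
Qed.

Lemma linked_cycle_heads_sub_iota : {subset map (head 0) L <= iota 1 n}.
Proof.
move=> _ /mapP [c cL ->]; apply: linked_cycle_sub_iota; apply/flattenP.
by exists c => //; case: (linked_cycle_head cL).
Qed.

Lemma linked_cycle_head1 c : c \in L -> 1 \in c -> head 0 c = 1.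
Proof.
move=> cL c1; have [hc hE] := linked_cycle_head cL.
have /linked_cycle_sub_iota : head 0 c \in flatten L by apply/flattenP; exists c.
by rewrite mem_iota hE; have := smin_le c1; lia.
Qed.

Lemma count_head_le1 i : count (fun c => head 0 c == i) L <= 1.
Proof.
case: HL => _ _ nd.
apply: (count_le1_nth (x0 := [::])) => p q lp lq /eqP hp /eqP hq.
case: (eqVneq p q) => // /eqP pq; exfalso.
have [hpL spE] := linked_cycle_head (mem_nth [::] lp).
have [hqL sqE] := linked_cycle_head (mem_nth [::] lq).
have ip : i \in nth [::] L p by rewrite -hp.
have iq : i \in nth [::] L q by rewrite -hq.
by apply: (nearly_disjoint_smin_neq (nd p q lp lq pq) ip iq); rewrite -spE -sqE hp hq.
Qed.

Lemma count_nonhead_le1 i : count (fun c => (i \in c) && (head 0 c != i)) L <= 1.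
Proof.
case: HL => _ _ nd; apply: (count_le1_nth (x0 := [::])) => p q lp lq.
case/andP=> ip /eqP hp /andP [iq /eqP hq].
case: (eqVneq p q) => // /eqP pq; exfalso.
have [_ spE] := linked_cycle_head (mem_nth [::] lp).
have [_ sqE] := linked_cycle_head (mem_nth [::] lq).
case: (nearly_disjoint_common_smin (nd p q lp lq pq) ip iq) => ei.
  by apply: hp; rewrite spE ei.
by apply: hq; rewrite sqE ei.
Qed.

Lemma count_nonhead1_eq0 : count (fun c => (1 \in c) && (head 0 c != 1)) L = 0.
Proof.
apply/eqP; rewrite -leqn0 leqNgt -has_count.
by apply/hasP => -[c cL /andP [c1]]; rewrite linked_cycle_head1.
Qed.

Lemma cover_count_split i :
  cover_count L i =
  count (fun c => head 0 c == i) L + count (fun c => (i \in c) && (head 0 c != i)) L.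
Proof.
rewrite /cover_count -count_predUI.
rewrite (@eq_count _ (predI _ _) pred0) ?count_pred0 ?addn0 => [|c /=]; last first.
  by case: eqP; rewrite ?andbF.
apply: eq_in_count => c /linked_cycle_head [hc _] /=.
by case: eqVneq => [<- | _]; rewrite ?hc ?andbT.
Qed.

Lemma cover_count_gt0 i : 1 <= i <= n -> 0 < cover_count L i.
Proof.
case: HL => _ cover _ /cover [c cL ic].
by rewrite /cover_count -has_count; apply/hasP; exists c.
Qed.

Lemma cover_count_add_marked i : 1 <= i <= n ->
  cover_count L i + marked L i = (i != 1) + count (fun c => head 0 c == i) L.
Proof.
move/cover_count_gt0; rewrite /marked has_count cover_count_split.
have := count_head_le1 i; have := count_nonhead_le1 i.
case: (eqVneq i 1) => [-> | _] /=; first by rewrite count_nonhead1_eq0 !addn0.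
move: (count _ L) (count _ L) => m h.
by case: h m => [|[|h]] [|[|m]].
Qed.

End LinkedCycle.

Lemma count_iota_neq1 n : 0 < n -> count (predC1 1) (iota 1 n) = n - 1.
Proof.
case: n => // n _; rewrite subn1 /=.
rewrite (eq_in_count (a2 := predT)) ?count_predT ?size_iota // => x.
by rewrite mem_iota /=; lia.
Qed.

Theorem proposition4p4 (n : nat) (L : seq (seq nat)) :
  1 <= n -> linked_cycle n L -> size (arcs L) + marks n L = n - 1.
Proof.
move=> n_gt0 HL; have [cycL _ _] := HL.
have arcsE : size (arcs L) + size L = \sum_(i <- iota 1 n) cover_count L i.
  rewrite size_arcs_add_size /cover_count ?sum_count_mem ?iota_uniq //.
  - by apply/allP => c /cycL [].
  - exact: linked_cycle_sub_iota HL.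
  - by apply/allP => c /cycL [].
have headsE : \sum_(i <- iota 1 n) count (fun c => head 0 c == i) L = size L.
  exact: sum_count_head (iota_uniq 1 n) (linked_cycle_heads_sub_iota HL).
have : \sum_(i <- iota 1 n) (cover_count L i + marked L i) =
       \sum_(i <- iota 1 n) ((i != 1) + count (fun c => head 0 c == i) L).
  apply: eq_big_seq => i; rewrite mem_iota add1n ltnS.
  exact: cover_count_add_marked.
rewrite !big_split /= !sum_bool_count headsE -arcsE count_iota_neq1 //.
by rewrite addnAC => /addIn.
Qed.
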